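(* (1) If $\beta\in\mathcal Q(\Phi_+)$ is not a simple root, then there exists $i\in I$ such that $r_i(\beta)\in\mathcal Q(\Phi_+)$ and $\mathrm{ht}(r_i(\beta^\vee))=\mathrm{ht}(\beta^\vee)-1$. (2) Let $\beta\in\mathcal Q(\Phi_+)$ and $i\in I$. Then $r_i(\beta)\in\mathcal Q(\Phi_+)$ if and only if $|\langle\beta^\vee,\alpha_i\rangle|\le1$.
   Context: Kac–Moody root datum $(A,X,Y,(\alpha_i)_{i\in I},(\alpha_i^\vee)_{i\in I})$ with generalized Cartan matrix $A=(a_{i,j})$, $\langle\alpha_i^\vee,\alpha_j\rangle=a_{i,j}$, simple reflections $r_i(x)=x-\langle\alpha_i^\vee,x\rangle\alpha_i$ on $X$ and $r_i(y)=y-\langle y,\alpha_i\rangle\alpha_i^\vee$ on $Y$, Weyl group $W^v=\langle r_i\rangle$. $\Phi=W^v\{\alpha_i\}$, $\Phi_+=\Phi\cap\bigoplus\mathbb Z_{\ge0}\alpha_i$, $\Phi_-=-\Phi_+$; coroot $\beta^\vee=w(\alpha_i^\vee)$ and reflection $s_\beta=wr_iw^{-1}$ for $\beta=w(\alpha_i)$; $\mathrm{ht}(\sum N_i\alpha_i^\vee)=\sum N_i$. $\mathrm{Inv}(w)=\{\alpha\in\Phi_+\mid w\alpha\in\Phi_-\}$. $\beta\in\Phi_+$ is quantum if $\langle\beta^\vee,\gamma\rangle=1$ for all $\gamma\in\mathrm{Inv}(s_\beta)\setminus\{\beta\}$; $\mathcal Q(\Phi_+)$ is the set of quantum roots. 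*)

(* Kac–Moody root datum with X = Z^m, Y = Z^m (row vectors),
   the perfect pairing <y,x> being the standard dot product. *)
From Stdlib Require Import ClassicalEpsilon.
From mathcomp Require Import all_boot all_order all_algebra.
Set Implicit Arguments. Unset Strict Implicit. Unset Printing Implicit Defensive.
Import Order.TTheory GRing.Theory Num.Theory.
Local Open Scope ring_scope.

Section KM.
Variables (n m : nat) (alpha alphav : 'I_n -> 'rV[int]_m).

Definition pair (y x : 'rV[int]_m) : int := \sum_(k < m) y 0 k * x 0 k.

Definition rX (i : 'I_n) (x : 'rV[int]_m) := x - pair (alphav i) x *: alpha i.
Definition rY (i : 'I_n) (y : 'rV[int]_m) := y - pair y (alpha i) *: alphav i.

(* an element of W^v given by a word [:: i1; ..; ik] is r_i1 ... r_ik *)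
Definition actX (w : seq 'I_n) x := foldr rX x w.
Definition actY (w : seq 'I_n) y := foldr rY y w.

(* real roots Phi = W^v {alpha_i}; a witness (w, i) with beta = w(alpha_i) *)
Definition is_root (b : 'rV[int]_m) : Prop :=
  exists p : seq 'I_n * 'I_n, b = actX p.1 (alpha p.2).

Definition is_pos_root b : Prop :=
  is_root b /\ exists N : 'I_n -> nat, b = \sum_(i < n) (N i)%:Z *: alpha i.
Definition is_neg_root b : Prop := is_pos_root (- b).

Definition root_rep (b : 'rV[int]_m) : option (seq 'I_n * 'I_n) :=
  match excluded_middle_informative (is_root b) with
  | left H => Some (proj1_sig (constructive_indefinite_description _ H))
  | right _ => None
  end.

Definition coroot b : 'rV[int]_m :=
  if root_rep b is Some p then actY p.1 (alphav p.2) else 0.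

(* word for s_beta = w r_i w^{-1} *)
Definition sword b : seq 'I_n :=
  if root_rep b is Some p then p.1 ++ p.2 :: rev p.1 else [::].

Definition in_Inv (w : seq 'I_n) g : Prop := is_pos_root g /\ is_neg_root (actX w g).

Definition quantum b : Prop :=
  is_pos_root b /\
  forall g, in_Inv (sword b) g -> g <> b -> pair (coroot b) g = 1.

Definition is_simple_root b : Prop := exists i, b = alpha i.

Definition ht (y : 'rV[int]_m) : int :=
  match excluded_middle_informative
          (exists N : 'I_n -> int, y = \sum_(i < n) N i *: alphav i) with
  | left H => let N := proj1_sig (constructive_indefinite_description _ H) in
              \sum_(i < n) N i
  | right _ => 0
  end.

Definition free_family (f : 'I_n -> 'rV[int]_m) : Prop :=
  forall c : 'I_n -> int, \sum_(i < n) c i *: f i = 0 -> forall i, c i = 0.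

End KM.

Definition is_GCM (n : nat) (A : 'M[int]_n) : Prop :=
  (forall i, A i i = 2) /\ (forall i j, i != j -> A i j <= 0) /\
  (forall i j, (A i j == 0) = (A j i == 0)).

(* The key fact is that every real root is a nonnegative or a nonpositive
   combination of simple roots, and likewise for coroots (Kac, Lemma 3.11); it is
   proved with the length function of [W^v], by reduction to explicit rank-two
   computations.  Let [beta] be quantum and [c = <beta^v, alpha_i>].  If
   [beta <> alpha_i] then [c <= 1], for otherwise [alpha_i] would be an inversion
   of [s_beta] with pairing [c > 1].  As [s_{r_i beta} = r_i s_beta r_i], the
   inversions of [s_{r_i beta}] other than [alpha_i] are the images under [r_i]
   of those of [s_beta], and [alpha_i] is one exactly when [c < 0]; comparing the
   pairings gives (2).  For (1), [<beta^v, beta> = 2] forces [c > 0], hence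
   [c = 1], for some [i] in the support of [beta], and then [r_i] lowers the
   height of [beta^v] by [c = 1]. *)

From Stdlib Require Import ClassicalEpsilon.
From mathcomp Require Import all_boot all_order all_algebra.
From mathcomp Require Import zify ring.
Set Implicit Arguments. Unset Strict Implicit. Unset Printing Implicit Defensive.
Import Order.TTheory GRing.Theory Num.Theory.
Local Open Scope ring_scope.

(** * Pairing and rank-two arithmetic *)

Section Pairing.
Variable m : nat.
Implicit Types x y z : 'rV[int]_m.

Lemma pairDl x y z : pair (x + y) z = pair x z + pair y z.
Proof. by rewrite /pair -big_split; apply: eq_bigr => k _; rewrite mxE mulrDl. Qed.
Lemma pairDr x y z : pair z (x + y) = pair z x + pair z y.
Proof. by rewrite /pair -big_split; apply: eq_bigr => k _; rewrite mxE mulrDr. Qed.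
Lemma pairZl (c : int) x z : pair (c *: x) z = c * pair x z.
Proof. by rewrite /pair mulr_sumr; apply: eq_bigr => k _; rewrite mxE mulrA. Qed.
Lemma pairZr (c : int) x z : pair z (c *: x) = c * pair z x.
Proof. by rewrite /pair mulr_sumr; apply: eq_bigr => k _; rewrite mxE mulrCA. Qed.
Lemma pairNl x z : pair (- x) z = - pair x z.
Proof. by rewrite -scaleN1r pairZl mulN1r. Qed.
Lemma pairNr x z : pair z (- x) = - pair z x.
Proof. by rewrite -scaleN1r pairZr mulN1r. Qed.
Lemma pairBl x y z : pair (x - y) z = pair x z - pair y z.
Proof. by rewrite pairDl pairNl. Qed.
Lemma pairBr x y z : pair z (x - y) = pair z x - pair z y.
Proof. by rewrite pairDr pairNr. Qed.
Lemma pair0r z : pair z 0 = 0.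
Proof. by rewrite -(scale0r 0) pairZr mul0r. Qed.
Lemma pairC x y : pair x y = pair y x.
Proof. by rewrite /pair; apply: eq_bigr => k _; rewrite mulrC. Qed.
Lemma pair_sumr (I : finType) (F : I -> 'rV[int]_m) z :
  pair z (\sum_i F i) = \sum_i pair z (F i).
Proof.
rewrite /pair exchange_big; apply: eq_bigr => k _.
by rewrite summxE mulr_sumr.
Qed.

End Pairing.

(* With [a = - a_st] and [b = - a_ts], [dihedral_coefs a b k] are the coordinates
   on [(alpha_s, alpha_t)] of [alt_word s t k] applied to [alpha_s], and
   [dihedral_track a b k p q] follows a vector [x] with [p = <alpha_s^v, x>],
   [q = <alpha_t^v, x>]: it returns the two new pairings and the coefficients of
   [alpha_s] and [alpha_t] added to [x] (see [actX_alt_simple], [actX_alt_track]). *)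
Fixpoint dihedral_coefs (a b : int) (k : nat) : int * int :=
  if k is k'.+1 then
    let: (c1, c2) := dihedral_coefs a b k' in
    if odd k' then (a * c2 - c1, c2) else (c1, b * c1 - c2)
  else (1, 0).

Fixpoint dihedral_track (a b : int) (k : nat) (p q : int) : int * int * int * int :=
  if k is k'.+1 then
    let: (p', q', c1, c2) := dihedral_track a b k' p q in
    if odd k' then (- p', q' + b * p', c1 - p', c2)
    else (p' + a * q', - q', c1, c2 - q')
  else (p, q, 0, 0).

Lemma dihedral_coefs_ge0 (a b : int) k : 0 <= a -> 0 <= b -> 4 <= a * b ->
  0 <= (dihedral_coefs a b k).1 /\ 0 <= (dihedral_coefs a b k).2.
Proof.
move=> ha hb hab.
suff [] : [/\ 0 <= (dihedral_coefs a b k).1, 0 <= (dihedral_coefs a b k).2 &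
    if odd k then 2 * (dihedral_coefs a b k).1 <= a * (dihedral_coefs a b k).2
    else 2 * (dihedral_coefs a b k).2 <= b * (dihedral_coefs a b k).1] by [].
elim: k => [|k [] /=]; first by rewrite /= mulr0 mulr1.
case: (dihedral_coefs a b k) => c1 c2 /= h1 h2.
case: (odd k) => h3 /=.
- have e : 2 * b * c1 <= a * b * c2 by nia.
  split; nia.
- have e : 2 * a * c2 <= a * b * c1 by nia.
  split; nia.
Qed.

(* The pairs [(- a_st, - a_ts)] of finite type [A1 x A1], [A2], [B2], [G2]. *)
Definition finite_dihedral (a b : int) :=
  ((a, b) == (0, 0)) || ((a, b) == (1, 1)) || ((a, b) == (1, 2)) ||
  ((a, b) == (2, 1)) || ((a, b) == (1, 3)) || ((a, b) == (3, 1)).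

(* The order of [r_s r_t], i.e. the length of the braid relation. *)
Definition dihedral_order (a b : int) : nat :=
  if a * b == 0 then 2 else if a * b == 1 then 3 else if a * b == 2 then 4%N else 6%N.

Lemma finite_dihedralP (a b : int) : 0 <= a -> 0 <= b -> (a == 0) = (b == 0) ->
  a * b < 4 -> finite_dihedral a b.
Proof.
move=> ha hb hz hab.
have [a0|an0] := eqVneq a 0.
  by move: hz; rewrite a0 eqxx => /esym/eqP ->.
move: hz; rewrite (negbTE an0) => /esym/negbT bn0.
have ea : a = 1 \/ a = 2 \/ a = 3 by nia.
have eb : b = 1 \/ b = 2 \/ b = 3 by nia.
by move: hab; case: ea => [->|[->|->]]; case: eb => [->|[->|->]].
Qed.

Lemma finite_dihedral_sym a b : finite_dihedral a b -> finite_dihedral b a.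
Proof.
rewrite /finite_dihedral => h.
by repeat (case/orP: h => h); move/eqP: h => [-> ->].
Qed.

Lemma dihedral_order_sym a b : dihedral_order a b = dihedral_order b a.
Proof. by rewrite /dihedral_order mulrC. Qed.

Lemma dihedral_order_gt0 a b : (0 < dihedral_order a b)%N.
Proof. by rewrite /dihedral_order; repeat case: ifP. Qed.

Lemma dihedral_coefs_ge0_finite (a b : int) k : finite_dihedral a b ->
  (k < dihedral_order a b)%N ->
  0 <= (dihedral_coefs a b k).1 /\ 0 <= (dihedral_coefs a b k).2.
Proof.
rewrite /finite_dihedral => h.
by repeat (case/orP: h => h); move/eqP: h => [-> ->];
  (do 6! (case: k => [//|k]) => //).
Qed.

Lemma dihedral_track_braid (a b : int) p q : finite_dihedral a b ->
  let M := dihedral_order a b in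
  (dihedral_track a b M p q).1.2 = (dihedral_track b a M q p).2 /\
  (dihedral_track a b M p q).2 = (dihedral_track b a M q p).1.2.
Proof.
rewrite /finite_dihedral => h.
by repeat (case/orP: h => h); move/eqP: h => [-> ->]; rewrite /=; split; ring.
Qed.

Fixpoint alt_word (I : Type) (x y : I) (k : nat) : seq I :=
  if k is k'.+1 then (if odd k' then x else y) :: alt_word x y k' else [::].

Section AltWord.
Variables (I : Type) (x y : I).

Lemma alt_word_rcons k : alt_word x y k.+1 = rcons (alt_word y x k) y.
Proof.
elim: k x y => [//|k IH] x' y'.
have -> : alt_word x' y' k.+2 = (if odd k.+1 then x' else y') :: alt_word x' y' k.+1 by [].
by rewrite IH /=; case: (odd k).
Qed.

Lemma size_alt_word k : size (alt_word x y k) = k.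
Proof. by elim: k => //= k ->. Qed.

Lemma all_alt_word (P : pred I) k : P x -> P y -> all P (alt_word x y k).
Proof. by move=> px py; elim: k => //= k ->; case: (odd k); rewrite ?px ?py. Qed.

Lemma alt_word_addn (P : pred I) k j : P x -> P y ->
  exists2 Q, all P Q /\ size Q = k & alt_word x y (k + j) = Q ++ alt_word x y j.
Proof.
move=> px py; elim: k => [|k [Q [aQ sQ] e]]; first by exists [::].
exists ((if odd (k + j) then x else y) :: Q); last by rewrite addSn /= e.
by rewrite /= aQ sQ; case: (odd _); rewrite ?px ?py.
Qed.

End AltWord.

Section Reflections.
Variables (n m : nat) (al alv : 'I_n -> 'rV[int]_m) (A : 'M[int]_n).
Hypothesis hA : is_GCM A.
Hypothesis hpair : forall i j, pair (alv i) (al j) = A i j.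

Local Notation rx := (rX al alv).
Local Notation ax := (actX al alv).
Local Notation ry := (rX alv al).

Lemma cartan_diag i : A i i = 2. Proof. by case: hA. Qed.

Lemma rXD i x y : rx i (x + y) = rx i x + rx i y.
Proof. by rewrite /rX pairDr scalerDl opprD addrACA. Qed.
Lemma rXZ i c x : rx i (c *: x) = c *: rx i x.
Proof. by rewrite /rX pairZr scalerBr scalerA. Qed.
Lemma rXN i x : rx i (- x) = - rx i x.
Proof. by rewrite /rX pairNr scaleNr opprB opprK addrC. Qed.
Lemma rX0 i : rx i 0 = 0.
Proof. by rewrite /rX pair0r scale0r subr0. Qed.
Lemma rXB i x y : rx i (x - y) = rx i x - rx i y.
Proof. by rewrite rXD rXN. Qed.

Lemma pair_rX i j x : pair (alv j) (rx i x) = pair (alv j) x - pair (alv i) x * A j i.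
Proof. by rewrite /rX pairBr pairZr hpair. Qed.

Lemma rX_simple i : rx i (al i) = - al i.
Proof. by rewrite /rX hpair cartan_diag scaler_nat mulr2n opprD addNKr. Qed.

Lemma rXK i : involutive (rx i).
Proof. by move=> x; rewrite {2}/rX rXB rXZ rX_simple /rX scalerN opprK addrNK. Qed.

Lemma actX_cons i w x : ax (i :: w) x = rx i (ax w x). Proof. by []. Qed.
Lemma actX_cat w1 w2 x : ax (w1 ++ w2) x = ax w1 (ax w2 x).
Proof. by rewrite /actX foldr_cat. Qed.
Lemma actX_rcons w i x : ax (rcons w i) x = ax w (rx i x).
Proof. by rewrite -cats1 actX_cat. Qed.
Lemma actXD w x y : ax w (x + y) = ax w x + ax w y.
Proof. by elim: w => //= i w ->; rewrite rXD. Qed.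
Lemma actXZ w c x : ax w (c *: x) = c *: ax w x.
Proof. by elim: w => //= i w ->; rewrite rXZ. Qed.
Lemma actXN w x : ax w (- x) = - ax w x.
Proof. by elim: w => //= i w ->; rewrite rXN. Qed.
Lemma actX0 w : ax w 0 = 0.
Proof. by elim: w => //= i w ->; rewrite rX0. Qed.
Lemma actXB w x y : ax w (x - y) = ax w x - ax w y.
Proof. by rewrite actXD actXN. Qed.

Lemma actX_revK w : cancel (ax w) (ax (rev w)).
Proof.
elim: w => //= i w IH x.
by rewrite rev_cons actX_rcons rXK IH.
Qed.
Lemma actX_Krev w : cancel (ax (rev w)) (ax w).
Proof. by move=> x; rewrite -{1}(revK w) actX_revK. Qed.

Lemma pair_rX_rX i y x : pair (ry i y) (rx i x) = pair y x.
Proof.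
rewrite /rX pairBl !pairBr !pairZl !pairZr hpair cartan_diag [pair (al i) y]pairC.
ring.
Qed.

Lemma pair_actX w y x : pair (actX alv al w y) (ax w x) = pair y x.
Proof. by elim: w => //= i w IH; rewrite pair_rX_rX IH. Qed.

Variables (s t : 'I_n).
Local Notation a := (- A s t).
Local Notation b := (- A t s).

Lemma rX_comb i (c1 c2 : int) : rx i (c1 *: al s + c2 *: al t) =
  c1 *: al s + c2 *: al t - (c1 * A i s + c2 * A i t) *: al i.
Proof. by rewrite {1}/rX pairDr !pairZr !hpair. Qed.

Lemma actX_alt_simple k : ax (alt_word s t k) (al s) =
  (dihedral_coefs a b k).1 *: al s + (dihedral_coefs a b k).2 *: al t.
Proof.
elim: k => [|k IH]; first by rewrite /= scale1r scale0r addr0.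
rewrite [alt_word _ _ _]/= actX_cons IH /=.
case: (dihedral_coefs a b k) => c1 c2 /=.
have lin_s d1 d2 d : d1 *: al s + d2 *: al t - d *: al s = (d1 - d) *: al s + d2 *: al t.
  by rewrite scalerBl addrAC.
have lin_t d1 d2 d : d1 *: al s + d2 *: al t - d *: al t = d1 *: al s + (d2 - d) *: al t.
  by rewrite scalerBl addrA.
case: (odd k); rewrite rX_comb cartan_diag ?lin_s ?lin_t;
  by congr (_ *: _ + _ *: _); rewrite /=; ring.
Qed.

Lemma actX_alt_track k x :
  let T := dihedral_track a b k (pair (alv s) x) (pair (alv t) x) in
  [/\ ax (alt_word s t k) x = x + T.1.2 *: al s + T.2 *: al t,
      pair (alv s) (ax (alt_word s t k) x) = T.1.1.1 &
      pair (alv t) (ax (alt_word s t k) x) = T.1.1.2].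
Proof.
elim: k => [|k IH]; first by rewrite /= !scale0r !addr0.
rewrite [alt_word _ _ _]/= actX_cons /=.
move: IH; case: (dihedral_track a b k _ _) => [[[p q] c1] c2] /= [e1 e2 e3].
have lin_s y d1 d2 d : y + d1 *: al s + d2 *: al t - d *: al s =
    y + (d1 - d) *: al s + d2 *: al t by rewrite scalerBl addrAC !addrA.
have lin_t y d1 d2 d : y + d1 *: al s + d2 *: al t - d *: al t =
    y + d1 *: al s + (d2 - d) *: al t by rewrite scalerBl !addrA.
case: (odd k) => /=; rewrite !pair_rX e2 e3 !cartan_diag; split.
- by rewrite /rX e2 e1 lin_s.
- ring.
- ring.
- by rewrite /rX e3 e1 lin_t.
- ring.
- ring.
Qed.

End Reflections.

(** * Words in the Weyl group and their length *)

Lemma is_GCM_tr n (A : 'M[int]_n) : is_GCM A -> is_GCM A^T.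
Proof.
case=> [h1 [h2 h3]]; split; first by move=> i; rewrite mxE.
split; first by move=> i j ij; rewrite mxE h2 // eq_sym.
by move=> i j; rewrite !mxE h3.
Qed.

Lemma rY_rX n m (al alv : 'I_n -> 'rV[int]_m) i y : rY al alv i y = rX alv al i y.
Proof. by rewrite /rY /rX pairC. Qed.
Lemma actY_actX n m (al alv : 'I_n -> 'rV[int]_m) w y :
  actY al alv w y = actX alv al w y.
Proof. by elim: w => //= i w ->; rewrite rY_rX. Qed.

Definition asbool (P : Prop) : bool :=
  if excluded_middle_informative P then true else false.
Lemma asboolP (P : Prop) : reflect P (asbool P).
Proof. by rewrite /asbool; case: excluded_middle_informative => h; constructor. Qed.

(* Least natural number satisfying [P], or [0] if there is none. *)
Definition cmin (P : nat -> Prop) : nat :=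
  match excluded_middle_informative (exists k, P k) with
  | left H => @ex_minn (fun k => asbool (P k))
                 (let: ex_intro k hk := H in ex_intro _ k (introT (asboolP _) hk))
  | right _ => 0%N
  end.

Lemma cminP (P : nat -> Prop) k : P k -> P (cmin P) /\ (forall j, P j -> cmin P <= j)%N.
Proof.
move=> hk; rewrite /cmin; case: excluded_middle_informative => [H|[]]; last by exists k.
case: ex_minnP => j /asboolP hj hmin; split=> // i hi; apply: hmin; exact/asboolP.
Qed.

Lemma eq_cmin (P Q : nat -> Prop) : (forall k, P k <-> Q k) -> cmin P = cmin Q.
Proof.
move=> e; case: (classic (exists k, P k)) => [[k hk]|nh].
  have [hP minP] := cminP hk; have [hQ minQ] := cminP (iffLR (e k) hk).
  by apply/eqP; rewrite eqn_leq minP ?minQ //; apply/e.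
rewrite /cmin; case: excluded_middle_informative => [[k hk]|_]; first by case: nh; exists k.
by case: excluded_middle_informative => [[k hk]|_] //; case: nh; exists k; apply/e.
Qed.

Section WeylWords.
Variables (n m : nat) (al alv : 'I_n -> 'rV[int]_m) (A : 'M[int]_n).
Hypothesis hA : is_GCM A.
Hypothesis hpair : forall i j, pair (alv i) (al j) = A i j.

Lemma pair_dual i j : pair (al i) (alv j) = A^T i j.
Proof. by rewrite mxE pairC hpair. Qed.
Let hAT := is_GCM_tr hA.

Local Notation ax := (actX al alv).
Local Notation ay := (actX alv al).

(* Two words define the same element of [W^v] when they act alike on [X] and
   on [Y]. *)
Definition same_act (w1 w2 : seq 'I_n) :=
  (forall x, ax w1 x = ax w2 x) /\ (forall y, ay w1 y = ay w2 y).

Lemma same_act_refl w : same_act w w. Proof. by []. Qed.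
Lemma same_act_sym w1 w2 : same_act w1 w2 -> same_act w2 w1.
Proof. by case=> h1 h2; split=> ?; rewrite ?h1 ?h2. Qed.
Lemma same_act_trans w1 w2 w3 : same_act w1 w2 -> same_act w2 w3 -> same_act w1 w3.
Proof. by case=> h1 h2 [h3 h4]; split=> ?; rewrite ?h1 ?h2 ?h3 ?h4. Qed.
Lemma same_act_cat v1 v2 w1 w2 :
  same_act v1 v2 -> same_act w1 w2 -> same_act (v1 ++ w1) (v2 ++ w2).
Proof. by case=> h1 h2 [h3 h4]; split=> ?; rewrite !actX_cat ?h1 ?h2 ?h3 ?h4. Qed.
Lemma same_act_cons i w1 w2 : same_act w1 w2 -> same_act (i :: w1) (i :: w2).
Proof. exact: (@same_act_cat [:: i] [:: i]). Qed.
Lemma same_act_rcons i w1 w2 : same_act w1 w2 -> same_act (rcons w1 i) (rcons w2 i).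
Proof. by move=> h; rewrite -!cats1; apply: same_act_cat. Qed.

Lemma same_act_cancel w1 w2 i : same_act (w1 ++ [:: i, i & w2]) (w1 ++ w2).
Proof.
apply: same_act_cat (same_act_refl _) _.
by split=> ? /=; rewrite ?(rXK hA hpair) ?(rXK hAT pair_dual).
Qed.
Lemma same_act_rcons2 w i : same_act (rcons (rcons w i) i) w.
Proof.
by rewrite -!cats1 -catA /= -{2}[w]cats0; apply: (@same_act_cancel w [::] i).
Qed.

(* Length of [w] in the parabolic subgroup generated by [p] ([0] if [w] is not
   in it). *)
Definition plen (p : pred 'I_n) w :=
  cmin (fun k => exists w', [/\ all p w', size w' = k & same_act w w']).
Definition len w := plen predT w.

Lemma plen_le (p : pred 'I_n) w w' : all p w' -> same_act w w' -> (plen p w <= size w')%N.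
Proof.
move=> hp he; rewrite /plen; set P := (X in cmin X).
by apply: (proj2 (@cminP P (size w') _)); exists w'.
Qed.

Lemma plen_witness (p : pred 'I_n) w : all p w ->
  exists w', [/\ all p w', size w' = plen p w & same_act w w'].
Proof.
by move=> hp; rewrite /plen; set P := (X in cmin X); apply: (proj1 (@cminP P (size w) _)); exists w.
Qed.

Lemma plen_same_act (p : pred 'I_n) w1 w2 : same_act w1 w2 -> plen p w1 = plen p w2.
Proof.
move=> e; apply: eq_cmin => k; split=> -[w' [h1 h2 h3]]; exists w'; split=> //.
  exact: same_act_trans (same_act_sym e) h3.
exact: same_act_trans e h3.
Qed.

Lemma plen_size (p : pred 'I_n) w : all p w -> (plen p w <= size w)%N.
Proof. by move=> h; apply: plen_le h (same_act_refl _). Qed.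

Lemma len_cat v u : (len (v ++ u) <= len v + len u)%N.
Proof.
rewrite /len.
have [v' [_ <- ev]] := plen_witness (all_predT v).
have [u' [_ <- eu]] := plen_witness (all_predT u).
by rewrite -size_cat; apply: plen_le (all_predT _) (same_act_cat ev eu).
Qed.

Lemma len_le_plen (p : pred 'I_n) u : all p u -> (len u <= plen p u)%N.
Proof.
by rewrite /len => h; have [u' [_ <- eu]] := plen_witness h; apply: plen_le (all_predT _) eu.
Qed.

Lemma plen_cons (p : pred 'I_n) i u : p i -> all p u ->
  (plen p (i :: u) <= (plen p u).+1)%N.
Proof.
move=> hi h; have [u' [au <- eu]] := plen_witness h.
by apply: (@plen_le _ _ (i :: u')); rewrite /= ?hi //; apply: same_act_cons.
Qed.

Lemma same_act_alt_word s t z : s != t -> all (pred2 s t) z ->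
  exists x y k, [/\ ((x == s) && (y == t)) || ((x == t) && (y == s)),
                    (k <= size z)%N & same_act z (alt_word x y k)].
Proof.
move=> hst; elim: z => [|c z IH]; first by exists s, t, 0%N; rewrite !eqxx.
rewrite /= => /andP[hc hz]; have [x [y [k [hxy hk ek]]]] := IH hz.
case: k hk ek => [|k] hk ek.
  exists (if c == s then t else s), c, 1%N; split => //; last exact: same_act_cons.
  have hts : t != s by rewrite eq_sym.
  by case/orP: hc => /eqP ->; rewrite ?(negbTE hts) !eqxx ?orbT.
have ealt : alt_word x y k.+1 = (if odd k then x else y) :: alt_word x y k by [].
have [ch|nch] := eqVneq c (if odd k then x else y).
  exists x, y, k; split => //; first by apply: leq_trans (leqnSn _) (leq_trans hk _).
  apply: same_act_trans (same_act_cons _ ek) _.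
  by rewrite ealt ch; apply: (@same_act_cancel [::]).
exists x, y, k.+2; split => //.
have -> : alt_word x y k.+2 = (if odd k.+1 then x else y) :: alt_word x y k.+1 by [].
suff -> : (if odd k.+1 then x else y) = c by apply: same_act_cons.
by case/orP: hxy => /andP[/eqP ex /eqP ey]; subst x y;
  case/orP: hc => /eqP ec; subst c; rewrite /=; case: (odd k) nch => /= /eqP nch //; case: nch.
Qed.

Section Braid.
Variables s t : 'I_n.
Hypothesis hfin : finite_dihedral (- A s t) (- A t s).
Local Notation M := (dihedral_order (- A s t) (- A t s)).

Lemma same_act_braid : same_act (alt_word s t M) (alt_word t s M).
Proof.
split=> [x|y].
  have [-> _ _] := actX_alt_track hA hpair s t M x.
  have [-> _ _] := actX_alt_track hA hpair t s M x.
  have [-> ->] := dihedral_track_braid (pair (alv s) x) (pair (alv t) x) hfin.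
  by rewrite addrAC.
have hfinT : finite_dihedral (- A^T s t) (- A^T t s).
  by rewrite !mxE; apply: finite_dihedral_sym.
set MT := dihedral_order (- A^T s t) (- A^T t s).
have -> : M = MT by rewrite /MT !mxE dihedral_order_sym.
have [-> _ _] := actX_alt_track hAT pair_dual s t MT y.
have [-> _ _] := actX_alt_track hAT pair_dual t s MT y.
have [-> ->] := dihedral_track_braid (pair (al s) y) (pair (al t) y) hfinT.
by rewrite addrAC.
Qed.

Lemma same_act_braid_succ : same_act (alt_word s t M.+1) (alt_word t s M.-1).
Proof.
have hM := dihedral_order_gt0 (- A s t) (- A t s).
rewrite alt_word_rcons.
apply: same_act_trans (same_act_rcons _ (same_act_sym same_act_braid)) _.
by rewrite -(prednK hM) alt_word_rcons; apply: same_act_rcons2.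
Qed.

End Braid.

Section RankTwo.
Variables s t : 'I_n.
Hypothesis hst : s != t.
Local Notation p := (pred2 s t).
Local Notation M := (dihedral_order (- A s t) (- A t s)).

Let ps : p s. Proof. by rewrite /= eqxx. Qed.
Let pt : p t. Proof. by rewrite /= eqxx orbT. Qed.

Lemma same_act_alt_plen u : all p u -> (plen p u <= plen p (rcons u s))%N ->
  same_act u (alt_word s t (plen p u)).
Proof.
move=> hu hle.
have [z [az sz ez]] := plen_witness hu.
have [x [y [k [hxy hk ek]]]] := same_act_alt_word hst az.
have ezu := same_act_trans ez ek.
have [px py] : p x /\ p y by case/orP: hxy => /andP[/eqP -> /eqP ->].
have hkL : k = plen p u.
  apply/eqP; rewrite eqn_leq -{1}sz hk /=.
  by rewrite -[X in (_ <= X)%N](size_alt_word x y k) plen_le ?all_alt_word.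
case/orP: hxy => /andP[/eqP ex /eqP ey]; subst x y; first by rewrite -hkL.
case: k hkL ezu {hk ek} => [|k] hkL ezu; first by rewrite -hkL.
have : same_act (rcons u s) (alt_word s t k).
  apply: same_act_trans (same_act_rcons _ ezu) _.
  by rewrite alt_word_rcons; apply: same_act_rcons2.
move/(plen_le (all_alt_word k ps pt)); rewrite size_alt_word.
by move: hle; rewrite -hkL; lia.
Qed.

(* If [M <= plen p u], the braid relation would shorten [u] or [u r_s]. *)
Lemma plen_lt_dihedral_order u : finite_dihedral (- A s t) (- A t s) ->
  all p u -> (plen p u <= plen p (rcons u s))%N ->
  same_act u (alt_word s t (plen p u)) -> (plen p u < M)%N.
Proof.
move=> hfin hu hle eu; set L := plen p u in hle eu *.
have hM := dihedral_order_gt0 (- A s t) (- A t s).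
rewrite ltnNge; apply/negP; rewrite leq_eqVlt => /orP[/eqP eML|hML].
  have : same_act (rcons u s) (alt_word s t M.-1).
    apply: same_act_trans (same_act_rcons _ eu) _; rewrite -eML.
    apply: same_act_trans (same_act_rcons _ (same_act_braid hfin)) _.
    rewrite -(prednK hM) alt_word_rcons prednK //; exact: same_act_rcons2.
  move/(plen_le (all_alt_word _ ps pt)); rewrite size_alt_word.
  by move: hle; rewrite -eML; lia.
have [Q [aQ sQ] eQ] := alt_word_addn (L - M.+1) M.+1 ps pt.
rewrite subnK // in eQ.
have : same_act u (Q ++ alt_word t s M.-1).
  apply: same_act_trans eu _; rewrite eQ.
  exact: same_act_cat (same_act_refl _) (same_act_braid_succ hfin).
have aQ' : all p (Q ++ alt_word t s M.-1) by rewrite all_cat aQ all_alt_word.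
move/(plen_le aQ'); rewrite size_cat sQ size_alt_word -/L.
by lia.
Qed.

Lemma rank2_nonneg u : all p u -> (plen p u <= plen p (rcons u s))%N ->
  exists c1 c2 d1 d2 : int, [/\ 0 <= c1, 0 <= c2, 0 <= d1 & 0 <= d2] /\
     (ax u (al s) = c1 *: al s + c2 *: al t /\ ay u (alv s) = d1 *: alv s + d2 *: alv t).
Proof.
move=> hu hle; have eu := same_act_alt_plen hu hle.
set L := plen p u in hle eu.
set a := - A s t; set b := - A t s.
exists (dihedral_coefs a b L).1, (dihedral_coefs a b L).2,
  (dihedral_coefs b a L).1, (dihedral_coefs b a L).2; split; last first.
  rewrite (proj1 eu) (proj2 eu) (actX_alt_simple hA hpair).
  by rewrite (actX_alt_simple hAT pair_dual) !mxE.
have ha : 0 <= a by rewrite oppr_ge0; case: hA => _ [h _]; apply: h.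
have hb : 0 <= b by rewrite oppr_ge0; case: hA => _ [h _]; apply: h; rewrite eq_sym.
have [h4|h4] := leP 4 (a * b).
  have [c1 c2] := dihedral_coefs_ge0 L ha hb h4.
  have h4' : 4 <= b * a by rewrite mulrC.
  have [d1 d2] := dihedral_coefs_ge0 L hb ha h4'.
  by split.
have hfin : finite_dihedral a b.
  by apply: finite_dihedralP => //; rewrite !oppr_eq0; case: hA => _ [_ h].
have hLM := plen_lt_dihedral_order hfin hu hle eu.
have [c1 c2] := dihedral_coefs_ge0_finite hfin hLM.
have hLM' : (L < dihedral_order b a)%N by rewrite dihedral_order_sym.
have [d1 d2] := dihedral_coefs_ge0_finite (finite_dihedral_sym hfin) hLM'.
by split.
Qed.

End RankTwo.
End WeylWords.

(** * Signs of real roots *)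

Definition nonneg_span n m (f : 'I_n -> 'rV[int]_m) x :=
  exists c : 'I_n -> int, (forall i, 0 <= c i) /\ x = \sum_i c i *: f i.

Section Combinations.
Variables (n m : nat) (f : 'I_n -> 'rV[int]_m).

Lemma nonneg_spanD x y : nonneg_span f x -> nonneg_span f y -> nonneg_span f (x + y).
Proof.
move=> [c [hc ->]] [d [hd ->]]; exists (fun i => c i + d i); split.
  by move=> i; rewrite addr_ge0.
by rewrite -big_split; apply: eq_bigr => i _; rewrite scalerDl.
Qed.

Lemma nonneg_spanZ a x : 0 <= a -> nonneg_span f x -> nonneg_span f (a *: x).
Proof.
move=> ha [c [hc ->]]; exists (fun i => a * c i); split.
  by move=> i; rewrite mulr_ge0.
by rewrite scaler_sumr; apply: eq_bigr => i _; rewrite scalerA.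
Qed.

Lemma sum_delta i : f i = \sum_j (j == i)%:R *: f j.
Proof.
rewrite (bigD1 i) //= eqxx scale1r big1 ?addr0 //.
by move=> j /negbTE ->; rewrite scale0r.
Qed.

Lemma nonneg_span_gen i : nonneg_span f (f i).
Proof. by exists (fun j => (j == i)%:R); split=> [j|]; [case: (j == i) | apply: sum_delta]. Qed.

Lemma sum_delta_subr (N : 'I_n -> int) c j :
  \sum_k N k *: f k - c *: f j = \sum_k (N k - (k == j)%:R * c) *: f k.
Proof.
rewrite (sum_delta j) scaler_sumr -sumrB; apply: eq_bigr => k _.
by rewrite scalerA scalerBl mulrC.
Qed.

Lemma delta_subr_sum (N : 'I_n -> int) c i :
  f i - c *: \sum_k N k *: f k = \sum_k ((k == i)%:R - c * N k) *: f k.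
Proof.
rewrite (sum_delta i) scaler_sumr -sumrB; apply: eq_bigr => k _.
by rewrite scalerA scalerBl.
Qed.

Section Free.
Hypothesis hf : free_family f.

Lemma free_sum_inj (c d : 'I_n -> int) :
  \sum_i c i *: f i = \sum_i d i *: f i -> c =1 d.
Proof.
move=> e i; apply/eqP; rewrite -subr_eq0; apply/eqP.
apply: (hf (c := fun k => c k - d k)).
rewrite (eq_bigr (fun i => c i *: f i - d i *: f i)); last by move=> k _; rewrite scalerBl.
by rewrite sumrB e subrr.
Qed.

Lemma free_neq0 i : f i != 0.
Proof.
apply/eqP => e; have := hf (c := fun j => (j == i)%:R).
by rewrite -sum_delta => /(_ e i); rewrite eqxx.
Qed.

Lemma nonneg_span_coef x (c : 'I_n -> int) :
  x = \sum_i c i *: f i -> nonneg_span f x -> forall i, 0 <= c i.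
Proof. by move=> -> [d [hd /free_sum_inj e]] i; rewrite e. Qed.

Lemma nonneg_span_opp_coef x (c : 'I_n -> int) :
  x = \sum_i c i *: f i -> nonneg_span f (- x) -> forall i, c i <= 0.
Proof.
move=> ex hp i; rewrite -oppr_ge0.
apply: (nonneg_span_coef (c := fun i => - c i)) hp i.
by rewrite ex -sumrN; apply: eq_bigr => j _; rewrite scaleNr.
Qed.

Lemma nonneg_span_anti x : nonneg_span f x -> nonneg_span f (- x) -> x = 0.
Proof.
move=> hp hn; have [c [hc ex]] := hp.
have h := nonneg_span_opp_coef ex hn.
rewrite ex big1 // => i _.
have -> : c i = 0 by apply/eqP; rewrite eq_le h hc.
by rewrite scale0r.
Qed.

Lemma nonneg_span_sub_gen x (c : int) j :
  nonneg_span f x -> nonneg_span f (c *: f j - x) -> exists2 d, 0 <= d & x = d *: f j.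
Proof.
move=> [N [hN eN]] [M [hM eM]].
have eNM : \sum_k (N k + M k) *: f k = \sum_k (c * (k == j)%:R) *: f k.
  under eq_bigr do rewrite scalerDl.
  under [RHS]eq_bigr do rewrite -scalerA.
  by rewrite big_split /= -eN -eM addrC subrK -scaler_sumr -sum_delta.
have Nk k : k != j -> N k = 0.
  by move=> /negbTE kj; move: (free_sum_inj eNM k) (hN k) (hM k); rewrite kj mulr0; lia.
exists (N j) => //; rewrite eN (bigD1 j) //= big1 ?addr0 // => k kj.
by rewrite Nk // scale0r.
Qed.

End Free.
End Combinations.

Section Positivity.
Variables (n m : nat) (al alv : 'I_n -> 'rV[int]_m) (A : 'M[int]_n).
Hypothesis hA : is_GCM A.
Hypothesis hpair : forall i j, pair (alv i) (al j) = A i j.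
Let hAT := is_GCM_tr hA.
Let hpair_dual := pair_dual hpair.

Local Notation ax := (actX al alv).
Local Notation ay := (actX alv al).
Local Notation same_act := (same_act al alv).
Local Notation len := (len al alv).
Local Notation plen := (plen al alv).

Lemma len_same_act w1 w2 : same_act w1 w2 -> len w1 = len w2.
Proof. exact: plen_same_act. Qed.

(* Minimal length coset representative modulo the parabolic subgroup [W_p]. *)
Lemma min_coset_factor (p : pred 'I_n) k w v0 u0 :
  all p u0 -> same_act w (v0 ++ u0) -> (len v0 + plen p u0 <= k)%N ->
  exists v u, [/\ all p u, same_act w (v ++ u), (len v <= len v0)%N,
     (len v + plen p u <= k)%N & forall r, p r -> (len v <= len (rcons v r))%N].
Proof.
have [N eN] : exists N, len v0 = N by exists (len v0).
elim/ltn_ind: N v0 u0 eN => N IH v0 u0 eN hu ew hk.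
have [/forallP hmin|/forallPn[r]] :=
  boolP [forall r, p r ==> (len v0 <= len (rcons v0 r))%N].
  by exists v0, u0; split=> // r pr; apply: (implyP (hmin r)).
rewrite negb_imply -ltnNge => /andP[pr hr].
have ew' : same_act w (rcons v0 r ++ r :: u0).
  apply: same_act_trans ew _; rewrite cat_rcons.
  exact: same_act_sym (same_act_cancel hA hpair v0 u0 r).
have hk' : (len (rcons v0 r) + plen p (r :: u0) <= k)%N.
  apply: leq_trans (leq_add (leqnn _) (plen_cons al alv pr hu)) _.
  by rewrite addnS -addSn; apply: leq_trans (leq_add hr (leqnn _)) hk.
have hru : all p (r :: u0) by rewrite /= pr.
have [v [u [hu' ew'' hv hk'' hmin]]] :=
  IH _ (leq_trans hr (eq_leq eN)) _ _ erefl hru ew' hk'.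
by exists v, u; split=> //; apply: leq_trans hv (ltnW hr).
Qed.

Lemma plen_factor_rcons (p : pred 'I_n) s w v u : p s -> all p u ->
  same_act w (v ++ u) -> (len v + plen p u <= len w)%N ->
  (len w <= len (rcons w s))%N -> (plen p u <= plen p (rcons u s))%N.
Proof.
move=> ps au evu hvu hle; rewrite leqNgt; apply/negP => hlt.
have ews : same_act (rcons w s) (v ++ rcons u s).
  by rewrite -rcons_cat; apply: same_act_rcons.
have hus : all p (rcons u s) by rewrite all_rcons ps au.
have := len_cat al alv v (rcons u s); have := len_le_plen al alv hus.
by move: hle; rewrite (len_same_act ews); lia.
Qed.

(* Kac, Lemma 3.11.  Strip the last letter [t] of a reduced word of [w], factor
   [w = v u] with [u] in [W_{s,t}] and [v] minimal in its coset, and conclude by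
   induction on [v] and by the rank-two computation on [u]. *)
Lemma actX_simple_nonneg w s : (len w <= len (rcons w s))%N ->
  nonneg_span al (ax w (al s)) /\ nonneg_span alv (ay w (alv s)).
Proof.
have [k ek] : exists k, len w = k by exists (len w).
elim/ltn_ind: k w s ek => k IH w s ek hle.
have [w' [_ sw ew]] := plen_witness al alv (all_predT w).
case: (lastP w') sw ew => [|w1 t] sw ew.
  by case: ew => -> ->; split; apply: nonneg_span_gen.
rewrite size_rcons -/(len w) ek in sw.
have ew1 : same_act (rcons w t) w1.
  exact: same_act_trans (same_act_rcons _ ew) (same_act_rcons2 hA hpair _ _).
have hw1 : (len w1 < k)%N by rewrite -sw ltnS; apply: plen_size (all_predT _).
have hst : s != t.
  apply/negP => /eqP est; move: hle; rewrite est (len_same_act ew1) ek.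
  by rewrite leqNgt hw1.
set p := pred2 s t.
have ps : p s by rewrite /p /= eqxx.
have pt : p t by rewrite /p /= eqxx orbT.
have ht : all p [:: t] by apply/andP.
have ewt : same_act w (w1 ++ [:: t]) by rewrite cats1.
have hk1 : (len w1 + plen p [:: t] <= k)%N.
  by rewrite -sw -addn1; apply: leq_add; apply: plen_size; rewrite ?all_predT.
have [v [u [au evu hv hvk hvmin]]] := min_coset_factor ht ewt hk1.
have hvk' : (len v < k)%N by apply: leq_ltn_trans hv hw1.
have [Xs Ys] := IH _ hvk' v s erefl (hvmin s ps).
have [Xt Yt] := IH _ hvk' v t erefl (hvmin t pt).
have hu := plen_factor_rcons ps au evu (leq_trans hvk (eq_leq (esym ek))) hle.
have [c1 [c2 [d1 [d2 [[h1 h2 h3 h4] [eX eY]]]]]] := rank2_nonneg hA hpair hst au hu.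
split.
  rewrite (proj1 evu) actX_cat eX actXD !actXZ.
  by apply: nonneg_spanD; apply: nonneg_spanZ.
rewrite (proj2 evu) actX_cat eY actXD !actXZ.
by apply: nonneg_spanD; apply: nonneg_spanZ.
Qed.

Lemma actX_simple_sign w s :
  (nonneg_span al (ax w (al s)) /\ nonneg_span alv (ay w (alv s))) \/
  (nonneg_span al (- ax w (al s)) /\ nonneg_span alv (- ay w (alv s))).
Proof.
have [h|h] := leqP (len w) (len (rcons w s)); first by left; apply: actX_simple_nonneg.
right; have e := same_act_rcons2 hA hpair w s.
have h2 : (len (rcons w s) <= len (rcons (rcons w s) s))%N.
  by rewrite (len_same_act e) ltnW.
have [] := actX_simple_nonneg h2.
by rewrite !actX_rcons (rX_simple hA hpair) (rX_simple hAT hpair_dual) !actXN.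
Qed.

End Positivity.

(** * Roots, coroots and quantum roots *)

Lemma actX_simple_span n m (al alv : 'I_n -> 'rV[int]_m) w i :
  exists N : 'I_n -> int, actX al alv w (al i) = \sum_k N k *: al k.
Proof.
elim: w => [|j w [N eN]]; first by exists (fun k => (k == i)%:R); apply: sum_delta.
exists (fun k => N k - (k == j)%:R * pair (alv j) (actX al alv w (al i))).
by rewrite /= {1}/rX eN sum_delta_subr.
Qed.

Section Roots.
Variables (n m : nat) (A : 'M[int]_n) (alpha alphav : 'I_n -> 'rV[int]_m).
Hypothesis hA : is_GCM A.
Hypothesis hpair : forall i j, pair (alphav i) (alpha j) = A i j.
Hypothesis hfree : free_family alpha.
Hypothesis hfreev : free_family alphav.
Let hAT := is_GCM_tr hA.
Let hpair_dual := pair_dual hpair.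

Local Notation ax := (actX alpha alphav).
Local Notation ay := (actX alphav alpha).
Local Notation rx := (rX alpha alphav).
Local Notation ry := (rX alphav alpha).
Local Notation root := (is_root alpha alphav).
Local Notation pos := (nonneg_span alpha).
Local Notation coroot := (coroot alpha alphav).

Lemma root_actX w b : root b -> root (ax w b).
Proof. by case=> [[w' i] /= ->]; exists (w ++ w', i); rewrite /= actX_cat. Qed.
Lemma root_simple i : root (alpha i). Proof. by exists ([::], i). Qed.
Lemma root_rX i b : root b -> root (rx i b).
Proof. exact: (root_actX [:: i]). Qed.
Lemma rootN b : root b -> root (- b).
Proof.
case=> [[w i] /= ->]; exists (rcons w i, i).
by rewrite /= actX_rcons (rX_simple hA hpair) actXN.
Qed.
Lemma root_neq0 b : root b -> b != 0.
Proof.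
case=> [[w i] /= ->]; apply/eqP => e.
by move: (free_neq0 hfree i); rewrite -(actX_revK hA hpair w (alpha i)) e actX0 eqxx.
Qed.
Lemma root_span b : root b -> exists c : 'I_n -> int, b = \sum_k c k *: alpha k.
Proof. by case=> [[w k] /= ->]; apply: actX_simple_span. Qed.

Lemma root_sign b : root b -> pos b \/ pos (- b).
Proof.
by case=> [[w i] /= ->]; case: (actX_simple_sign hA hpair w i) => [[]|[]]; [left|right].
Qed.
Lemma root_sign_excl b : root b -> pos b -> pos (- b) -> False.
Proof. by move=> r h1 h2; move: (root_neq0 r); rewrite (nonneg_span_anti hfree h1 h2) eqxx. Qed.

Lemma nonneg_span_nat x :
  pos x <-> exists N : 'I_n -> nat, x = \sum_(i < n) (N i)%:Z *: alpha i.
Proof.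
split; last by case=> N ->; exists (fun i => (N i)%:Z).
case=> c [hc ->]; exists (fun i => absz (c i)); apply: eq_bigr => i _.
by rewrite gez0_abs.
Qed.

Lemma pos_rootE b : is_pos_root alpha alphav b <-> root b /\ pos b.
Proof. by rewrite /is_pos_root nonneg_span_nat. Qed.
Lemma neg_rootE b : is_neg_root alpha alphav b <-> root b /\ pos (- b).
Proof.
rewrite /is_neg_root pos_rootE; split=> -[r h]; split=> //.
  by rewrite -(opprK b); apply: rootN.
exact: rootN.
Qed.

(* Makes [coroot] independent of the representation chosen by [root_rep]. *)
Lemma actX_simple_coroot u i j : ax u (alpha i) = alpha j -> ay u (alphav i) = alphav j.
Proof.
move=> eu; set v := ay u (alphav i).
have pv : nonneg_span alphav v.
  case: (actX_simple_sign hA hpair u i) => [[_ //]|[h _]].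
  by case: (root_sign_excl (root_simple j) (nonneg_span_gen _ j)); rewrite -eu.
have p2 : pair v (alpha j) = 2.
  by rewrite -eu /v (pair_actX hA hpair) hpair (cartan_diag hA).
have nv : nonneg_span alphav (2 *: alphav j - v).
  case: (actX_simple_sign hA hpair (j :: u) i) => [[h _]|[_]].
    move: h; rewrite /= eu (rX_simple hA hpair) => h.
    by case: (root_sign_excl (rootN (root_simple j)) h); rewrite opprK; apply: nonneg_span_gen.
  by rewrite /= -/v /rX [pair (alpha j) v]pairC p2 opprB.
have [d _ ev] := nonneg_span_sub_gen hfreev pv nv.
move: p2; rewrite ev pairZl hpair (cartan_diag hA) => d2.
by rewrite (_ : d = 1) ?scale1r //; lia.
Qed.

Lemma root_rep_spec b : root b ->
  exists p, root_rep alpha alphav b = Some p /\ b = ax p.1 (alpha p.2).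
Proof.
move=> r; rewrite /root_rep; case: excluded_middle_informative => // H.
eexists; split; first reflexivity.
by case: (constructive_indefinite_description _ H).
Qed.

Lemma coroot_actX w i : coroot (ax w (alpha i)) = ay w (alphav i).
Proof.
have [[w' j] [e1 /= e2]] := root_rep_spec (root_actX w (root_simple i)).
rewrite /coroot e1 /= actY_actX.
have e : ax (rev w' ++ w) (alpha i) = alpha j by rewrite actX_cat e2 (actX_revK hA hpair).
by rewrite -(actX_simple_coroot e) actX_cat (actX_Krev hAT hpair_dual).
Qed.

Lemma coroot_simple i : coroot (alpha i) = alphav i.
Proof. exact: (coroot_actX [::] i). Qed.

Lemma coroot_rX i b : root b -> coroot (rx i b) = ry i (coroot b).
Proof. by case=> [[w k] /= ->]; rewrite -[rx i _]/(ax (i :: w) _) !coroot_actX. Qed.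

Lemma pair_coroot_root b : root b -> pair (coroot b) b = 2.
Proof.
by case=> [[w k] /= ->]; rewrite coroot_actX (pair_actX hA hpair) hpair (cartan_diag hA).
Qed.

Lemma pair_rX_dual i y x : pair (ry i y) x = pair y (rx i x).
Proof. by rewrite -{1}(rXK hA hpair i x) (pair_rX_rX hA hpair). Qed.

Lemma coroot_span b : root b -> exists N : 'I_n -> int, coroot b = \sum_k N k *: alphav k.
Proof. by case=> [[w k] /= ->]; rewrite coroot_actX; apply: actX_simple_span. Qed.

Lemma ht_sum (N : 'I_n -> int) : ht alphav (\sum_k N k *: alphav k) = \sum_k N k.
Proof.
rewrite /ht; case: excluded_middle_informative => [H|[]]; last by exists N.
case: (constructive_indefinite_description _ H) => N' /= /(free_sum_inj hfreev) e.
by apply: eq_bigr => k _; rewrite e.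
Qed.

Definition root_refl b x := x - pair (coroot b) x *: b.

Lemma actX_sword b x : root b -> ax (sword alpha alphav b) x = root_refl b x.
Proof.
move=> r; have [[w i] [e1 /= e2]] := root_rep_spec r.
rewrite /sword /root_refl /coroot e1 /= actX_cat /= /rX actXB actXZ.
rewrite (actX_Krev hA hpair) -e2 actY_actX -(pair_actX hA hpair w).
by rewrite (actX_Krev hA hpair).
Qed.

Lemma root_reflK b : root b -> involutive (root_refl b).
Proof.
move=> r x; rewrite {1}/root_refl pairBr pairZr (pair_coroot_root r) /root_refl.
set c := pair _ x; rewrite -addrA -opprD -scalerDl.
by rewrite (_ : c + (c - c * 2) = 0) ?scale0r ?subr0 //; ring.
Qed.

Lemma root_refl_root b x : root b -> root x -> root (root_refl b x).
Proof. by move=> rb rx'; rewrite -actX_sword //; apply: root_actX. Qed.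

Lemma root_pos_of_coef b (c : 'I_n -> int) j :
  root b -> b = \sum_k c k *: alpha k -> 0 < c j -> pos b.
Proof.
move=> r e h; case: (root_sign r) => // hn.
by move: (nonneg_span_opp_coef hfree e hn j); rewrite leNgt h.
Qed.

Lemma root_neg_of_coef b (c : 'I_n -> int) j :
  root b -> b = \sum_k c k *: alpha k -> c j < 0 -> pos (- b).
Proof.
move=> r e h; case: (root_sign r) => // hp.
by move: (nonneg_span_coef hfree e hp j); rewrite leNgt h.
Qed.

Lemma root_nonneg_multiple b (c : int) i : root b -> b = c *: alpha i -> 0 <= c -> c = 1.
Proof.
case=> [[w k] /= eb] e c0.
have [d ed] := actX_simple_span alpha alphav (rev w) i.
have : alpha k = \sum_j (c * d j) *: alpha j.
  rewrite -(actX_revK hA hpair w (alpha k)) -eb e actXZ ed scaler_sumr.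
  by apply: eq_bigr => j _; rewrite scalerA.
rewrite {1}(sum_delta alpha k) => /(free_sum_inj hfree) /(_ k); rewrite eqxx => h.
have cd1 : c * d k = 1 by rewrite -h.
by case: (ltrP 0 (d k)) => hd; nia.
Qed.

Lemma pos_root_coef_other b (c : 'I_n -> int) i : root b -> pos b ->
  b = \sum_k c k *: alpha k -> b != alpha i -> exists j, j != i /\ 0 < c j.
Proof.
move=> r hp e hne.
have [/existsP [j /andP [h1 h2]]|/existsP nh] := boolP [exists j, (j != i) && (0 < c j)].
  by exists j.
have hc := nonneg_span_coef hfree e hp.
have z j : j != i -> c j = 0.
  move=> ji; apply/eqP; rewrite eq_le hc andbT leNgt.
  by apply/negP => h; apply: nh; exists j; rewrite ji h.
have eb : b = c i *: alpha i.
  by rewrite e (bigD1 i) //= big1 ?addr0 // => j ji; rewrite z // scale0r.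
by move: hne; rewrite eb (root_nonneg_multiple r eb (hc i)) scale1r eqxx.
Qed.

Lemma pos_root_rX b i : root b -> pos b -> b != alpha i -> pos (rx i b).
Proof.
move=> r hp hne.
have [c e] := root_span r.
have [j [ji hj]] := pos_root_coef_other r hp e hne.
apply: (root_pos_of_coef (c := fun k => c k - (k == i)%:R * pair (alphav i) b) (j := j)).
- exact: root_rX.
- by rewrite /rX {1}e sum_delta_subr.
- by rewrite (negbTE ji) mul0r subr0.
Qed.

Lemma in_InvE b g : root b ->
  in_Inv alpha alphav (sword alpha alphav b) g <->
  [/\ root g, pos g & pos (- root_refl b g)].
Proof.
move=> rb; rewrite /in_Inv pos_rootE neg_rootE actX_sword //.
split; first by case=> -[r p] [_ q].
by case=> r p q; do !split=> //; apply: root_refl_root.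
Qed.

Lemma quantumE b : quantum alpha alphav b <->
  [/\ root b, pos b & forall g, root g -> pos g -> pos (- root_refl b g) ->
        g <> b -> pair (coroot b) g = 1].
Proof.
rewrite /quantum pos_rootE; split.
  by case=> -[r p] h; split=> // g rg pg ng; apply: h; apply/in_InvE.
by case=> r p h; split=> // g /(in_InvE g r) [rg pg ng]; apply: h.
Qed.

Lemma quantum_pair_simple b i : quantum alpha alphav b -> b != alpha i ->
  0 < pair (coroot b) (alpha i) -> pair (coroot b) (alpha i) = 1.
Proof.
move=> /quantumE [rb pb hq] hne hc.
apply: hq; [exact: root_simple | exact: nonneg_span_gen | |].
  have [M eM] := root_span rb.
  have [j [ji hj]] := pos_root_coef_other rb pb eM hne.
  apply: (@root_neg_of_coef _ (fun k => (k == i)%:R - pair (coroot b) (alpha i) * M k) j).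
  - exact: root_refl_root (root_simple i).
  - by rewrite /root_refl {2}eM delta_subr_sum.
  - by rewrite (negbTE ji) sub0r oppr_lt0 mulr_gt0.
by move=> e; rewrite e eqxx in hne.
Qed.

Lemma quantum_pair_simple_le1 b i : quantum alpha alphav b -> b != alpha i ->
  pair (coroot b) (alpha i) <= 1.
Proof.
move=> qb hne; have [h|h] := ltrP 0 (pair (coroot b) (alpha i)).
  by rewrite (quantum_pair_simple qb hne h).
exact: le_trans h ler01.
Qed.

Section SimpleReflection.
Variables (b : 'rV[int]_m) (i : 'I_n).
Hypotheses (rb : root b) (pb : pos b).
Local Notation c := (pair (coroot b) (alpha i)).

Lemma pair_coroot_rX x : pair (coroot (rx i b)) x = pair (coroot b) (rx i x).
Proof. by rewrite coroot_rX // pair_rX_dual. Qed.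

Lemma root_refl_rX x : root_refl (rx i b) x = rx i (root_refl b (rx i x)).
Proof. by rewrite /root_refl pair_coroot_rX rXB rXZ (rXK hA hpair). Qed.

Lemma rX_neq_simple : rx i b != alpha i.
Proof.
apply/eqP => e; apply: (root_sign_excl (root_simple i) (nonneg_span_gen _ i)).
by rewrite -(rX_simple hA hpair) -e (rXK hA hpair).
Qed.

Hypothesis qb : quantum alpha alphav b.
Hypothesis nbi : b != alpha i.

Lemma quantum_rX_pair_ge : quantum alpha alphav (rx i b) -> -1 <= c.
Proof.
move=> qg; rewrite leNgt; apply/negP => hlt.
have cg : pair (coroot (rx i b)) (alpha i) = - c.
  by rewrite pair_coroot_rX (rX_simple hA hpair) pairNr.
have := quantum_pair_simple qg rX_neq_simple; rewrite cg; lia.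
Qed.

(* The case [s_beta (r_i d) = alpha_i] of [quantum_rX]: then
   [r_i d = alpha_i - c beta], which rules out [c = 0] and [c = 1]. *)
Lemma pair_coroot_refl_simple d : `|c| <= 1 -> root d -> pos d -> d != alpha i ->
  root_refl b (rx i d) = alpha i -> pair (coroot b) (rx i d) = 1.
Proof.
move=> hc rd pd ndi ee.
have ed' : rx i d = alpha i - c *: b by rewrite -(root_reflK rb (rx i d)) ee.
rewrite ed' pairBr pairZr (pair_coroot_root rb).
have [c0|[c0|c0]] : c = -1 \/ c = 0 \/ c = 1 by move: hc; rewrite ler_norml; lia.
- by rewrite c0.
- move: ed'; rewrite c0 scale0r subr0 => /(congr1 (rx i)); rewrite (rXK hA hpair) => ed.
  case: (root_sign_excl (root_simple i) (nonneg_span_gen _ i)).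
  by rewrite -(rX_simple hA hpair) -ed.
- have [M eM] := root_span rb.
  have [j [ji hj]] := pos_root_coef_other rb pb eM nbi.
  have : pos (- rx i d).
    apply: (@root_neg_of_coef _ (fun k => (k == i)%:R - c * M k) j (root_rX i rd)).
      by rewrite ed' eM delta_subr_sum.
    by rewrite (negbTE ji) c0 mul1r sub0r oppr_lt0.
  by case/(root_sign_excl (root_rX i rd) (pos_root_rX rd pd ndi)).
Qed.

Lemma quantum_rX : `|c| <= 1 -> quantum alpha alphav (rx i b).
Proof.
move=> hc; have [_ _ hq] := (quantumE b).1 qb.
apply/quantumE; split; [exact: root_rX | exact: pos_root_rX | move=> d rd pd nd dg].
rewrite pair_coroot_rX.
have [edi|ndi] := eqVneq d (alpha i).
  (* [s_{r_i beta} alpha_i = alpha_i + c r_i beta] is negative only if [c < 0]. *)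
  rewrite edi (rX_simple hA hpair) pairNr.
  have [hc0|hc0] := ltrP c 0; first by move: hc; rewrite ler_norml; lia.
  case: (root_sign_excl (root_refl_root (root_rX i rb) (root_simple i))) => //.
    rewrite /root_refl pair_coroot_rX (rX_simple hA hpair) pairNr scaleNr opprK.
    apply: nonneg_spanD; first exact: nonneg_span_gen.
    by apply: nonneg_spanZ; last exact: pos_root_rX.
  by rewrite -edi.
move: nd; rewrite root_refl_rX => nd.
case: (root_sign (root_refl_root rb (root_rX i rd))) => [pe|ne]; last first.
  apply: hq ne _; [exact: root_rX | exact: pos_root_rX |].
  by move=> ed; apply: dg; rewrite -ed (rXK hA hpair).
apply: pair_coroot_refl_simple => //.
have [//|hne] := eqVneq (root_refl b (rx i d)) (alpha i).
have rr := root_refl_root rb (root_rX i rd).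
by case: (root_sign_excl (root_rX i rr) (pos_root_rX rr pe hne) nd).
Qed.

End SimpleReflection.

Lemma quantum_rX_iff b i : quantum alpha alphav b ->
  quantum alpha alphav (rx i b) <-> `|pair (coroot b) (alpha i)| <= 1.
Proof.
move=> qb; have [rb pb _] := (quantumE b).1 qb.
have [ebi|nbi] := eqVneq b (alpha i).
  rewrite ebi coroot_simple hpair (cartan_diag hA) (rX_simple hA hpair).
  split=> // /quantumE[_ pn _].
  by case: (root_sign_excl (root_simple i) (nonneg_span_gen _ i) pn).
split; last exact: quantum_rX.
move=> qg; rewrite ler_norml quantum_pair_simple_le1 // andbT.
exact: quantum_rX_pair_ge.
Qed.

Lemma exists_pair_coroot_simple_gt0 b : root b -> pos b ->
  exists k, 0 < pair (coroot b) (alpha k).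
Proof.
move=> rb pb; have [M eM] := root_span rb.
have hM := nonneg_span_coef hfree eM pb.
have h2 : \sum_k M k * pair (coroot b) (alpha k) = 2.
  rewrite -(pair_coroot_root rb) [X in pair _ X]eM pair_sumr.
  by apply: eq_bigr => k _; rewrite pairZr.
have [/existsP [k hk]|/existsP nh] := boolP [exists k, 0 < M k * pair (coroot b) (alpha k)].
  by exists k; move: (hM k) hk; nia.
suff : \sum_k M k * pair (coroot b) (alpha k) <= 0 by rewrite h2.
by apply: sumr_le0 => k _; rewrite leNgt; apply/negP => h; apply: nh; exists k.
Qed.

Lemma quantum_descent b : quantum alpha alphav b -> ~ is_simple_root alpha b ->
  exists i, quantum alpha alphav (rx i b) /\
    ht alphav (rY alpha alphav i (coroot b)) = ht alphav (coroot b) - 1.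
Proof.
move=> qb ns; have [rb pb _] := (quantumE b).1 qb.
have [k hk] := exists_pair_coroot_simple_gt0 rb pb.
have nbk : b != alpha k by apply/eqP => e; apply: ns; exists k.
have c1 := quantum_pair_simple qb nbk hk.
exists k; split; first by apply/(quantum_rX_iff k qb); rewrite c1 normr1.
have [N eN] := coroot_span rb.
rewrite rY_rX {1}/rX [pair (alpha k) _]pairC c1 eN sum_delta_subr !ht_sum sumrB.
congr (_ - _); rewrite (bigD1 k) //= eqxx mulr1 big1 ?addr0 // => j /negbTE ->.
by rewrite mul0r.
Qed.

End Roots.

Theorem proposition2p5 (n m : nat) (A : 'M[int]_n)
  (alpha alphav : 'I_n -> 'rV[int]_m)
  (hA : is_GCM A)
  (hpair : forall i j, pair (alphav i) (alpha j) = A i j)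
  (hfree : free_family alpha) (hfreev : free_family alphav) :
  (forall b, quantum alpha alphav b -> ~ is_simple_root alpha b ->
     exists i, quantum alpha alphav (rX alpha alphav i b) /\
       ht alphav (rY alpha alphav i (coroot alpha alphav b))
         = ht alphav (coroot alpha alphav b) - 1) /\
  (forall b i, quantum alpha alphav b ->
     (quantum alpha alphav (rX alpha alphav i b) <->
      `|pair (coroot alpha alphav b) (alpha i)| <= 1)).
Proof.
split=> [b | b i].
  exact: (quantum_descent hA hpair hfree hfreev).
exact: (quantum_rX_iff hA hpair hfree hfreev).
Qed.
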